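(* Let $U\colon[0,1]^2\to[0,1]$ be a uninorm with neutral element $e\in(0,1)$, $U\in\mathcal U$, and let $c\in[0,1]$ be an idempotent element of $U$. If $a,b$ are idempotent elements of $U$ such that $U(x,x)\ne x$ for all $x\in(a,b)$, then either $U(c,x)=\min(x,c)$ for all $x\in(a,b)$, or $U(c,x)=\max(x,c)$ for all $x\in(a,b)$. Moreover, if $U$ on $[a,b]^2$ is a nilpotent t-norm (resp. nilpotent t-conorm), then either $U(c,x)=\min(x,c)$ for all $x\in[a,b)$ (resp. $x\in(a,b]$) or $U(c,x)=\max(x,c)$ for all $x\in[a,b)$ (resp. $x\in(a,b]$).
   Context: A uninorm is a commutative, associative binary operation on $[0,1]$, non-decreasing in each variable, with a neutral element $e$. Underlying t-norm $T_U(x,y)=U(ex,ey)/e$, underlying t-conorm $C_U(x,y)=(U(e+(1-e)x,e+(1-e)y)-e)/(1-e)$; $\mathcal U$ is the class of uninorms for which both are continuous. An idempotent element is $x$ with $U(x,x)=x$. ''$U$ on $[a,b]^2$ is a nilpotent t-norm (t-conorm)'' means that the restriction of $U$ to $[a,b]^2$, transported to $[0,1]^2$ by the increasing linear bijection $[a,b]\to[0,1]$, is a nilpotent t-norm (t-conorm), i.e. a continuous t-norm with only idempotents $0,1$ and $T(x,y)=0$ for some $x,y\in(0,1)$ (resp. a continuous t-conorm with only idempotents $0,1$ and $S(x,y)=1$ for some $x,y\in(0,1)$). *)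

From Stdlib Require Import Reals Lra.
Open Scope R_scope.

Definition in01 (x : R) : Prop := 0 <= x <= 1.

Definition is_uninorm (U : R -> R -> R) (e : R) : Prop :=
  in01 e /\
  (forall x y, in01 x -> in01 y -> in01 (U x y)) /\
  (forall x y, in01 x -> in01 y -> U x y = U y x) /\
  (forall x y z, in01 x -> in01 y -> in01 z -> U x (U y z) = U (U x y) z) /\
  (forall x1 x2 y, in01 x1 -> in01 x2 -> in01 y -> x1 <= x2 -> U x1 y <= U x2 y) /\
  (forall x, in01 x -> U e x = x).

Definition is_tnorm (T : R -> R -> R) : Prop := is_uninorm T 1.
Definition is_tconorm (S : R -> R -> R) : Prop := is_uninorm S 0.

Definition continuous01 (F : R -> R -> R) : Prop :=
  forall x y, in01 x -> in01 y -> forall eps, 0 < eps -> exists delta, 0 < delta /\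
    forall x' y', in01 x' -> in01 y' -> Rabs (x' - x) < delta -> Rabs (y' - y) < delta ->
      Rabs (F x' y' - F x y) < eps.

Definition underlying_tnorm (U : R -> R -> R) (e : R) : R -> R -> R :=
  fun x y => U (e * x) (e * y) / e.
Definition underlying_tconorm (U : R -> R -> R) (e : R) : R -> R -> R :=
  fun x y => (U (e + (1 - e) * x) (e + (1 - e) * y) - e) / (1 - e).

Definition in_classU (U : R -> R -> R) (e : R) : Prop :=
  continuous01 (underlying_tnorm U e) /\ continuous01 (underlying_tconorm U e).

Definition idempotent (U : R -> R -> R) (x : R) : Prop := in01 x /\ U x x = x.

(* Restriction of U to [a,b]^2 transported to [0,1]^2 by the increasing linear bijection. *)
Definition transport (U : R -> R -> R) (a b : R) : R -> R -> R :=
  fun x y => (U (a + (b - a) * x) (a + (b - a) * y) - a) / (b - a).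

Definition is_nilpotent_tnorm (T : R -> R -> R) : Prop :=
  is_tnorm T /\ continuous01 T /\
  (forall x, in01 x -> T x x = x -> x = 0 \/ x = 1) /\
  (exists x y, 0 < x < 1 /\ 0 < y < 1 /\ T x y = 0).

Definition is_nilpotent_tconorm (S : R -> R -> R) : Prop :=
  is_tconorm S /\ continuous01 S /\
  (forall x, in01 x -> S x x = x -> x = 0 \/ x = 1) /\
  (exists x y, 0 < x < 1 /\ 0 < y < 1 /\ S x y = 1).

Definition nilpotent_tnorm_on (U : R -> R -> R) (a b : R) : Prop :=
  a < b /\ is_nilpotent_tnorm (transport U a b).
Definition nilpotent_tconorm_on (U : R -> R -> R) (a b : R) : Prop :=
  a < b /\ is_nilpotent_tconorm (transport U a b).

(* Since e is idempotent, a gap (a, b) between idempotents lies in [0, e] or in [e, 1],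
   and the second case is the first one for the dual uninorm 1 - U (1 - x) (1 - y).
   On [0, e]^2 the uninorm is continuous, so by the intermediate value theorem every
   z <= y <= e factors as z = U y w; hence the fixed points of U c in [0, e] are closed
   downwards, and for c >= e every z <= e is either fixed (U c z = z) or absorbed
   (U c z = c).  If a gap contained both kinds of points, let s be the supremum of the
   fixed points: as U s s < s, continuity of the diagonal yields t > s with U t t < s,
   and then U c (U t t) = U (U c t) t = c contradicts U t t being fixed.  At the closed
   end of a nilpotent gap, a (resp. b) equals U x y for some x, y in the gap, and
   associativity carries the alternative over. *)

From Stdlib Require Import Reals Lra Classical FunctionalExtensionality.
Open Scope R_scope.

Definition cont_on (f : R -> R) (lo hi : R) : Prop :=
  forall p, lo <= p <= hi -> forall eps, 0 < eps -> exists d, 0 < d /\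
    forall p', lo <= p' <= hi -> Rabs (p' - p) < d -> Rabs (f p' - f p) < eps.

Definition cont2_on (F : R -> R -> R) (lo hi : R) : Prop :=
  forall p q, lo <= p <= hi -> lo <= q <= hi -> forall eps, 0 < eps -> exists d, 0 < d /\
    forall p' q', lo <= p' <= hi -> lo <= q' <= hi ->
      Rabs (p' - p) < d -> Rabs (q' - q) < d -> Rabs (F p' q' - F p q) < eps.

Lemma cont2_on_section F lo hi y : lo <= y <= hi -> cont2_on F lo hi -> cont_on (F y) lo hi.
Proof.
  intros Hy HF p Hp eps Heps.
  destruct (HF y p Hy Hp eps Heps) as [d [Hd Hfd]].
  exists d; split; [exact Hd|].
  intros p' Hp' Hpp'. apply Hfd; auto. rewrite Rminus_diag, Rabs_R0; exact Hd.
Qed.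

Lemma cont2_on_diag F lo hi : cont2_on F lo hi -> cont_on (fun p => F p p) lo hi.
Proof.
  intros HF p Hp eps Heps.
  destruct (HF p p Hp Hp eps Heps) as [d [Hd Hfd]].
  exists d; split; [exact Hd|]. intros p' Hp' Hpp'. apply Hfd; auto.
Qed.

Definition clamp (lo hi z : R) : R := Rmax lo (Rmin hi z).

Lemma clamp_in lo hi z : lo <= hi -> lo <= clamp lo hi z <= hi.
Proof. intros H. unfold clamp, Rmax, Rmin. repeat destruct Rle_dec; lra. Qed.

Lemma clamp_id lo hi z : lo <= z <= hi -> clamp lo hi z = z.
Proof. intros H. unfold clamp, Rmax, Rmin. repeat destruct Rle_dec; lra. Qed.

Lemma clamp_dist lo hi y z : lo <= hi -> Rabs (clamp lo hi y - clamp lo hi z) <= Rabs (y - z).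
Proof.
  intros H. unfold clamp, Rmax, Rmin, Rabs.
  repeat destruct Rle_dec; repeat destruct Rcase_abs; lra.
Qed.

(* Composing with the 1-Lipschitz retraction [clamp] turns continuity on [lo, hi]
   into continuity on all of R, where the global IVT applies. *)
Lemma cont_on_IVT f lo hi v : lo <= hi -> cont_on f lo hi -> f lo <= v <= f hi ->
  exists z, lo <= z <= hi /\ f z = v.
Proof.
  intros Hlh Hf Hv.
  set (g := fun z => f (clamp lo hi z) - v).
  assert (Hg : continuity g).
  { intros x eps Heps.
    destruct (Hf (clamp lo hi x) (clamp_in lo hi x Hlh) eps Heps) as [d [Hd Hfd]].
    exists d; split; [exact Hd|]. intros y [_ Hy]. simpl in Hy |- *. unfold Rdist, g in *.
    replace (f (clamp lo hi y) - v - (f (clamp lo hi x) - v))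
      with (f (clamp lo hi y) - f (clamp lo hi x)) by ring.
    apply Hfd; [apply clamp_in; exact Hlh|].
    pose proof (clamp_dist lo hi y x Hlh). lra. }
  destruct (IVT_cor g lo hi Hg Hlh) as [z [Hz Hgz]].
  { unfold g. rewrite !clamp_id by lra. nra. }
  exists z. split; [exact Hz|]. unfold g in Hgz. rewrite clamp_id in Hgz by lra. lra.
Qed.

Lemma cont_on_lt_right f lo hi s b v : cont_on f lo hi -> lo <= s -> s < b -> b <= hi ->
  f s < v -> exists t, s < t < b /\ f t < v.
Proof.
  intros Hf Hs Hsb Hb Hv.
  destruct (Hf s ltac:(lra) (v - f s) ltac:(lra)) as [d [Hd Hfd]].
  set (t := Rmin (s + d / 2) ((s + b) / 2)).
  assert (Ht : s < t < b /\ t - s < d) by (unfold t, Rmin; destruct Rle_dec; lra).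
  exists t. split; [lra|].
  assert (Hclose : Rabs (f t - f s) < v - f s)
    by (apply Hfd; [lra | rewrite Rabs_pos_eq; lra]).
  apply Rabs_def2 in Hclose. lra.
Qed.

Lemma Rdiv_lt_iff x y k : 0 < k -> x / k < y <-> x < y * k.
Proof.
  intros Hk. split; intros H.
  - apply (Rmult_lt_compat_r k) in H; [|exact Hk].
    unfold Rdiv in H. rewrite Rmult_assoc, Rinv_l, Rmult_1_r in H by lra. exact H.
  - apply (Rmult_lt_reg_r k); [exact Hk|].
    unfold Rdiv. rewrite Rmult_assoc, Rinv_l, Rmult_1_r by lra. exact H.
Qed.

Lemma Rabs_div_pos x k : 0 < k -> Rabs (x / k) = Rabs x / k.
Proof.
  intros Hk. unfold Rdiv. rewrite Rabs_mult, Rabs_inv, (Rabs_pos_eq k) by lra. reflexivity.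
Qed.

Lemma rescale_in01 lo hi z : lo < hi -> lo <= z <= hi -> in01 ((z - lo) / (hi - lo)).
Proof.
  intros Hlh Hz. split.
  - unfold Rdiv. apply Rmult_le_pos; [lra|]. left; apply Rinv_0_lt_compat; lra.
  - apply (Rmult_le_reg_r (hi - lo)); [lra|].
    unfold Rdiv. rewrite Rmult_assoc, Rinv_l by lra. lra.
Qed.

Lemma transport_cont2_on U lo hi :
  lo < hi -> continuous01 (transport U lo hi) -> cont2_on U lo hi.
Proof.
  intros Hlh HT p q Hp Hq eps Heps.
  assert (Hk : 0 < hi - lo) by lra.
  assert (Hback : forall z, lo + (hi - lo) * ((z - lo) / (hi - lo)) = z)
    by (intros; field; lra).
  assert (Hdist : forall z w, Rabs ((z - lo) / (hi - lo) - (w - lo) / (hi - lo))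
                             = Rabs (z - w) / (hi - lo)).
  { intros z w. rewrite <- Rabs_div_pos by exact Hk. f_equal. field. lra. }
  destruct (HT ((p - lo) / (hi - lo)) ((q - lo) / (hi - lo))
              (rescale_in01 lo hi p Hlh Hp) (rescale_in01 lo hi q Hlh Hq)
              (eps / (hi - lo)) (Rdiv_lt_0_compat _ _ Heps Hk)) as [d [Hd Hfd]].
  exists (d * (hi - lo)). split; [nra|].
  intros p' q' Hp' Hq' Hpp Hqq.
  specialize (Hfd _ _ (rescale_in01 lo hi p' Hlh Hp') (rescale_in01 lo hi q' Hlh Hq')).
  unfold transport in Hfd. rewrite !Hback, !Hdist in Hfd.
  rewrite !Rdiv_lt_iff in Hfd by exact Hk.
  replace eps with (eps / (hi - lo) * (hi - lo)) by (field; lra).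
  apply Hfd; assumption.
Qed.

Lemma classU_cont2_on_low U e : 0 < e < 1 -> in_classU U e -> cont2_on U 0 e.
Proof.
  intros He [HT _]. apply transport_cont2_on; [lra|].
  replace (transport U 0 e) with (underlying_tnorm U e); [exact HT|].
  extensionality x; extensionality y. unfold transport, underlying_tnorm.
  rewrite !Rminus_0_r, !Rplus_0_l. reflexivity.
Qed.

Lemma classU_cont2_on_high U e : 0 < e < 1 -> in_classU U e -> cont2_on U e 1.
Proof. intros He [_ HS]. apply transport_cont2_on; [lra | exact HS]. Qed.

Definition id_or_const_on (U : R -> R -> R) (c : R) (P : R -> Prop) : Prop :=
  (forall x, P x -> U c x = x) \/ (forall x, P x -> U c x = c).

Lemma id_or_const_on_sub U c (P Q : R -> Prop) :
  (forall x, Q x -> P x) -> id_or_const_on U c P -> id_or_const_on U c Q.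
Proof. intros HQP [H|H]; [left | right]; intros x Hx; apply H, HQP, Hx. Qed.

Lemma id_or_const_on_min_max U c a b (P : R -> Prop) :
  (forall x, P x -> a <= x <= b) -> c <= a \/ b <= c -> id_or_const_on U c P ->
  (forall x, P x -> U c x = Rmin x c) \/ (forall x, P x -> U c x = Rmax x c).
Proof.
  intros HP Hc [H|H]; destruct Hc as [Hc|Hc];
    [right | left | left | right]; intros x Hx; rewrite H by exact Hx;
    specialize (HP x Hx);
    [rewrite Rmax_left | rewrite Rmin_left | rewrite Rmin_right | rewrite Rmax_right]; lra.
Qed.

Lemma idempotent_outside_gap U c a b :
  idempotent U c -> (forall x, a < x < b -> U x x <> x) -> c <= a \/ b <= c.
Proof.
  intros [_ Hcc] Hgap.
  destruct (Rle_or_lt c a) as [Hca|Hac]; [left; exact Hca|].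
  destruct (Rle_or_lt b c) as [Hbc|Hcb]; [right; exact Hbc|].
  exfalso. apply (Hgap c); [lra | exact Hcc].
Qed.

Section Uninorm.

Variables (U : R -> R -> R) (e : R).
Hypothesis HU : is_uninorm U e.

Lemma uni_neutral_in01 : in01 e.
Proof. apply HU. Qed.

Lemma uni_in01 x y : in01 x -> in01 y -> in01 (U x y).
Proof. apply HU. Qed.

Lemma uni_comm x y : in01 x -> in01 y -> U x y = U y x.
Proof. apply HU. Qed.

Lemma uni_assoc x y z : in01 x -> in01 y -> in01 z -> U x (U y z) = U (U x y) z.
Proof. apply HU. Qed.

Lemma uni_mono_l x1 x2 y : in01 x1 -> in01 x2 -> in01 y -> x1 <= x2 -> U x1 y <= U x2 y.
Proof. apply HU. Qed.

Lemma uni_mono_r x y1 y2 : in01 x -> in01 y1 -> in01 y2 -> y1 <= y2 -> U x y1 <= U x y2.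
Proof.
  intros Hx Hy1 Hy2 Hle. rewrite (uni_comm x y1), (uni_comm x y2) by assumption.
  apply uni_mono_l; assumption.
Qed.

Lemma uni_neutral_l x : in01 x -> U e x = x.
Proof. apply HU. Qed.

Lemma uni_neutral_r x : in01 x -> U x e = x.
Proof.
  intros Hx. rewrite uni_comm by (exact Hx || exact uni_neutral_in01).
  apply uni_neutral_l, Hx.
Qed.

Lemma idempotent_absorbs_above c x : idempotent U c -> c <= x <= e -> U c x = c.
Proof.
  intros [Hc Hcc] Hx. pose proof uni_neutral_in01 as He.
  assert (Hx01 : in01 x) by (unfold in01 in *; lra).
  assert (U c c <= U c x) by (apply uni_mono_r; auto; lra).
  assert (U c x <= U c e) by (apply uni_mono_r; auto; lra).
  rewrite uni_neutral_r in * by exact Hc. lra.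
Qed.

End Uninorm.

Section LowerPart.

Variables (U : R -> R -> R) (e : R).
Hypothesis HU : is_uninorm U e.
Hypothesis Hcont : cont2_on U 0 e.

Lemma uni_annihilates_below x : 0 <= x <= e -> U x 0 = 0.
Proof.
  intros Hx. pose proof (uni_neutral_in01 U e HU) as He.
  assert (Hx01 : in01 x) by (unfold in01 in *; lra).
  assert (H0 : in01 0) by (unfold in01; lra).
  pose proof (uni_in01 U e HU x 0 Hx01 H0).
  assert (U x 0 <= U e 0) by (apply (uni_mono_l U e); auto; lra).
  rewrite (uni_neutral_l U e HU) in * by exact H0. unfold in01 in *. lra.
Qed.

Lemma section_onto_below y z : 0 <= y <= e -> 0 <= z <= y ->
  exists w, 0 <= w <= e /\ U y w = z.
Proof.
  intros Hy Hz. pose proof (uni_neutral_in01 U e HU) as He.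
  apply cont_on_IVT; [lra | exact (cont2_on_section U 0 e y Hy Hcont) |].
  rewrite uni_annihilates_below, (uni_neutral_r U e HU) by (unfold in01 in *; lra). lra.
Qed.

Lemma fixed_point_below c y z : in01 c -> 0 <= y <= e -> U c y = y -> 0 <= z <= y ->
  U c z = z.
Proof.
  intros Hc Hy Hcy Hz. pose proof (uni_neutral_in01 U e HU) as He.
  destruct (section_onto_below y z Hy Hz) as [w [Hw <-]].
  rewrite (uni_assoc U e HU), Hcy by (unfold in01 in *; lra). reflexivity.
Qed.

Lemma idempotent_above_e_id_or_const c z : idempotent U c -> e <= c -> 0 <= z <= e ->
  U c z = z \/ U c z = c.
Proof.
  intros [Hc Hcc] Hec Hz. pose proof (uni_neutral_in01 U e HU) as He.
  assert (Hz01 : in01 z) by (unfold in01 in *; lra).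
  assert (Hlo : z <= U c z).
  { rewrite <- (uni_neutral_l U e HU z Hz01) at 1. apply (uni_mono_l U e); auto. }
  assert (Hhi : U c z <= c).
  { rewrite <- (uni_neutral_r U e HU c Hc) at 2. apply (uni_mono_r U e); auto; lra. }
  assert (Hfix : U c (U c z) = U c z) by (rewrite (uni_assoc U e HU), Hcc; auto).
  destruct (Rle_or_lt (U c z) e) as [Hle|Hgt].
  - left. apply (fixed_point_below c (U c z)); auto; lra.
  - right. apply Rle_antisym; [exact Hhi|].
    rewrite <- Hfix. rewrite <- (uni_neutral_r U e HU c Hc) at 1.
    apply (uni_mono_r U e); auto; try (apply (uni_in01 U e HU); auto); lra.
Qed.

Lemma gap_not_fixed_and_absorbed c a b x1 x2 :
  idempotent U c -> e <= c -> 0 <= a -> b <= e -> (forall x, a < x < b -> U x x <> x) ->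
  a < x1 < b -> a < x2 < b -> U c x1 = x1 -> U c x2 = c -> False.
Proof.
  intros Hc Hec Ha Hb Hgap Hx1 Hx2 Hcx1 Hcx2.
  pose proof (proj1 Hc) as Hc01. pose proof (uni_neutral_in01 U e HU) as He.
  set (G := fun t => 0 <= t <= e /\ U c t = t).
  assert (Hdown : forall t z, G t -> 0 <= z <= t -> G z).
  { intros t z [Ht Hct] Hz. split; [lra|]. exact (fixed_point_below c t z Hc01 Ht Hct Hz). }
  destruct (completeness G) as [s [Hub Hleast]].
  { exists e. intros t [Ht _]. lra. }
  { exists x1. split; [lra | exact Hcx1]. }
  assert (Hx1s : x1 <= s) by (apply Hub; split; [lra | exact Hcx1]).
  assert (Hsx2 : s <= x2).
  { apply Hleast. intros t Ht. apply Rnot_lt_le. intros Hlt.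
    destruct (Hdown t x2 Ht ltac:(lra)) as [_ Hfix]. lra. }
  assert (Hs01 : in01 s) by (unfold in01 in *; lra).
  assert (Hss : U s s < s).
  { assert (Hle : U s s <= U s e) by (apply (uni_mono_r U e HU); auto; lra).
    rewrite (uni_neutral_r U e HU s Hs01) in Hle.
    destruct (Rle_lt_or_eq_dec _ _ Hle) as [Hlt|Heq]; [exact Hlt|].
    exfalso. apply (Hgap s); [lra | exact Heq]. }
  destruct (cont_on_lt_right (fun p => U p p) 0 e s b s (cont2_on_diag U 0 e Hcont)
              ltac:(lra) ltac:(lra) Hb Hss) as [t [Ht Htt]].
  assert (Ht01 : in01 t) by (unfold in01 in *; lra).
  assert (Hct : U c t = c).
  { destruct (idempotent_above_e_id_or_const c t Hc Hec ltac:(lra)) as [Hfix|Habs];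
      [|exact Habs].
    exfalso. assert (t <= s) by (apply Hub; split; [lra | exact Hfix]). lra. }
  assert (Habsorbed : U c (U t t) = c)
    by (rewrite (uni_assoc U e HU), !Hct by assumption; reflexivity).
  pose proof (uni_in01 U e HU t t Ht01 Ht01) as Htt01.
  assert (Hfixed : G (U t t)).
  { apply NNPP. intros HnG. assert (s <= U t t); [|lra].
    apply Hleast. intros g Hg. apply Rnot_lt_le. intros Hlt.
    apply HnG, (Hdown g); [exact Hg | unfold in01 in Htt01; lra]. }
  destruct Hfixed as [_ Hfix]. lra.
Qed.

Lemma gap_below_id_or_const c a b :
  idempotent U c -> 0 <= a -> b <= e -> (forall x, a < x < b -> U x x <> x) ->
  id_or_const_on U c (fun x => a < x < b).
Proof.
  intros Hc Ha Hb Hgap.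
  destruct (Rle_or_lt c e) as [Hce|Hec].
  - destruct (idempotent_outside_gap U c a b Hc Hgap) as [Hca|Hbc].
    + right. intros x Hx. apply (idempotent_absorbs_above U e HU); [exact Hc | lra].
    + left. intros x Hx. destruct Hc as [Hc01 Hcc].
      apply (fixed_point_below c c x Hc01); [unfold in01 in *; lra | exact Hcc | lra].
  - destruct (classic (forall x, a < x < b -> U c x = x)) as [Hid|Hnid];
      [left; exact Hid | right].
    apply not_all_ex_not in Hnid. destruct Hnid as [x2 Hx2].
    apply imply_to_and in Hx2. destruct Hx2 as [Hx2 Hnfix].
    assert (Hcx2 : U c x2 = c).
    { destruct (idempotent_above_e_id_or_const c x2 Hc ltac:(lra) ltac:(lra)); tauto. }
    intros x1 Hx1.
    destruct (idempotent_above_e_id_or_const c x1 Hc ltac:(lra) ltac:(lra)) as [Hfix|Habs];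
      [exfalso | exact Habs].
    exact (gap_not_fixed_and_absorbed c a b x1 x2 Hc ltac:(lra) Ha Hb Hgap Hx1 Hx2 Hfix Hcx2).
Qed.

End LowerPart.

Definition dual (U : R -> R -> R) : R -> R -> R := fun x y => 1 - U (1 - x) (1 - y).

Lemma one_minus_involutive x : 1 - (1 - x) = x.
Proof. ring. Qed.

Lemma in01_one_minus x : in01 x -> in01 (1 - x).
Proof. unfold in01. lra. Qed.

Lemma dual_uninorm U e : is_uninorm U e -> is_uninorm (dual U) (1 - e).
Proof.
  intros (He & Hcl & Hcom & Has & Hm & Hn). unfold dual.
  split; [|split; [|split; [|split; [|split]]]].
  - apply in01_one_minus, He.
  - intros x y Hx Hy. apply in01_one_minus, Hcl; apply in01_one_minus; assumption.
  - intros x y Hx Hy. rewrite Hcom by (apply in01_one_minus; assumption). reflexivity.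
  - intros x y z Hx Hy Hz. rewrite !one_minus_involutive, Has by (apply in01_one_minus; assumption).
    reflexivity.
  - intros x1 x2 y Hx1 Hx2 Hy Hle.
    assert (U (1 - x2) (1 - y) <= U (1 - x1) (1 - y))
      by (apply Hm; try (apply in01_one_minus; assumption); lra).
    lra.
  - intros x Hx. rewrite one_minus_involutive, Hn by (apply in01_one_minus; assumption). ring.
Qed.

Lemma dual_idempotent U x : idempotent U x -> idempotent (dual U) (1 - x).
Proof.
  intros [Hx Hxx]. split; [apply in01_one_minus, Hx|].
  unfold dual. rewrite one_minus_involutive, Hxx. ring.
Qed.

Lemma dual_cont2_on U lo hi : cont2_on U lo hi -> cont2_on (dual U) (1 - hi) (1 - lo).
Proof.
  intros HU p q Hp Hq eps Heps. unfold dual.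
  destruct (HU (1 - p) (1 - q) ltac:(lra) ltac:(lra) eps Heps) as [d [Hd Hfd]].
  exists d. split; [exact Hd|]. intros p' q' Hp' Hq' Hpp Hqq.
  rewrite <- Rabs_Ropp. replace (- (1 - U (1 - p') (1 - q') - (1 - U (1 - p) (1 - q))))
    with (U (1 - p') (1 - q') - U (1 - p) (1 - q)) by ring.
  apply Hfd; try lra.
  - rewrite <- Rabs_Ropp. replace (- (1 - p' - (1 - p))) with (p' - p) by ring. exact Hpp.
  - rewrite <- Rabs_Ropp. replace (- (1 - q' - (1 - q))) with (q' - q) by ring. exact Hqq.
Qed.

Lemma gap_above_id_or_const U e c a b :
  is_uninorm U e -> cont2_on U e 1 -> idempotent U c -> e <= a -> b <= 1 ->
  (forall x, a < x < b -> U x x <> x) -> id_or_const_on U c (fun x => a < x < b).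
Proof.
  intros HU Hcont Hc Ha Hb Hgap.
  assert (Hdual_cont : cont2_on (dual U) 0 (1 - e))
    by (rewrite <- Rminus_diag with 1; exact (dual_cont2_on U e 1 Hcont)).
  destruct (gap_below_id_or_const (dual U) (1 - e) (dual_uninorm U e HU) Hdual_cont
              (1 - c) (1 - b) (1 - a) (dual_idempotent U c Hc) ltac:(lra) ltac:(lra))
    as [Hid|Hconst].
  { intros x Hx Hfix. apply (Hgap (1 - x)); [lra|].
    unfold dual in Hfix. lra. }
  - left. intros x Hx. specialize (Hid (1 - x) ltac:(lra)).
    unfold dual in Hid. rewrite !one_minus_involutive in Hid. lra.
  - right. intros x Hx. specialize (Hconst (1 - x) ltac:(lra)).
    unfold dual in Hconst. rewrite !one_minus_involutive in Hconst. lra.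
Qed.

Lemma gap_id_or_const U e c a b :
  is_uninorm U e -> 0 < e < 1 -> in_classU U e ->
  idempotent U c -> idempotent U a -> idempotent U b ->
  (forall x, a < x < b -> U x x <> x) -> id_or_const_on U c (fun x => a < x < b).
Proof.
  intros HU He HC Hc [Ha _] [Hb _] Hgap.
  destruct (Rle_or_lt b e) as [Hbe|Heb].
  - apply (gap_below_id_or_const U e HU (classU_cont2_on_low U e He HC));
      [exact Hc | apply Ha | exact Hbe | exact Hgap].
  - destruct (Rle_or_lt e a) as [Hea|Hae].
    + apply (gap_above_id_or_const U e); [exact HU | exact (classU_cont2_on_high U e He HC)
        | exact Hc | exact Hea | apply Hb | exact Hgap].
    + exfalso. apply (Hgap e); [lra|]. apply (uni_neutral_l U e HU), HU.
Qed.

Lemma id_or_const_on_product U e c (P : R -> Prop) x y :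
  is_uninorm U e -> in01 c -> (forall z, P z -> in01 z) -> P x -> P y ->
  id_or_const_on U c P -> id_or_const_on U c (fun z => P z \/ z = U x y).
Proof.
  intros HU Hc HP Hx Hy [Hid|Hconst]; [left | right]; intros z [Hz | ->].
  - exact (Hid z Hz).
  - rewrite (uni_assoc U e HU), (Hid x Hx) by auto. reflexivity.
  - exact (Hconst z Hz).
  - rewrite (uni_assoc U e HU), (Hconst x Hx) by auto. exact (Hconst y Hy).
Qed.

Lemma transport_preimage U a b v : a < b ->
  (exists x y, 0 < x < 1 /\ 0 < y < 1 /\ transport U a b x y = v) ->
  exists x y, a < x < b /\ a < y < b /\ U x y = a + (b - a) * v.
Proof.
  intros Hab (x & y & Hx & Hy & Hv).
  exists (a + (b - a) * x), (a + (b - a) * y).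
  split; [nra | split; [nra |]].
  rewrite <- Hv. unfold transport. field. lra.
Qed.

Lemma nilpotent_tnorm_on_zero_divisors U a b : nilpotent_tnorm_on U a b ->
  exists x y, a < x < b /\ a < y < b /\ U x y = a.
Proof.
  intros [Hab (_ & _ & _ & Hzd)].
  destruct (transport_preimage U a b 0 Hab Hzd) as (x & y & Hx & Hy & Hxy).
  exists x, y. rewrite Hxy. split; [exact Hx | split; [exact Hy | ring]].
Qed.

Lemma nilpotent_tconorm_on_unit_divisors U a b : nilpotent_tconorm_on U a b ->
  exists x y, a < x < b /\ a < y < b /\ U x y = b.
Proof.
  intros [Hab (_ & _ & _ & Hzd)].
  destruct (transport_preimage U a b 1 Hab Hzd) as (x & y & Hx & Hy & Hxy).
  exists x, y. rewrite Hxy. split; [exact Hx | split; [exact Hy | ring]].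
Qed.

Theorem lemma7 (U : R -> R -> R) (e c a b : R) :
  is_uninorm U e -> 0 < e < 1 -> in_classU U e ->
  idempotent U c -> idempotent U a -> idempotent U b ->
  (forall x, a < x < b -> U x x <> x) ->
  ((forall x, a < x < b -> U c x = Rmin x c) \/
   (forall x, a < x < b -> U c x = Rmax x c)) /\
  (nilpotent_tnorm_on U a b ->
     (forall x, a <= x < b -> U c x = Rmin x c) \/
     (forall x, a <= x < b -> U c x = Rmax x c)) /\
  (nilpotent_tconorm_on U a b ->
     (forall x, a < x <= b -> U c x = Rmin x c) \/
     (forall x, a < x <= b -> U c x = Rmax x c)).
Proof.
  intros HU He HC Hc Ha Hb Hgap.
  pose proof (idempotent_outside_gap U c a b Hc Hgap) as Hcab.
  pose proof (gap_id_or_const U e c a b HU He HC Hc Ha Hb Hgap) as Hgap_ioc.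
  assert (Hgap01 : forall z, a < z < b -> in01 z)
    by (destruct Ha as [Ha _], Hb as [Hb _]; unfold in01 in *; intros; lra).
  split; [|split].
  - apply (id_or_const_on_min_max U c a b); [intros; lra | exact Hcab | exact Hgap_ioc].
  - intros Hnil. destruct (nilpotent_tnorm_on_zero_divisors U a b Hnil) as (x & y & Hx & Hy & Hxy).
    apply (id_or_const_on_min_max U c a b); [intros; lra | exact Hcab |].
    apply (id_or_const_on_sub U c (fun z => (a < z < b) \/ z = U x y)).
    + intros z [Haz Hzb]. destruct Haz as [Haz | <-]; [left; lra | right; congruence].
    + apply (id_or_const_on_product U e); [exact HU | apply Hc | exact Hgap01 | exact Hx | exact Hy | exact Hgap_ioc].
  - intros Hnil. destruct (nilpotent_tconorm_on_unit_divisors U a b Hnil) as (x & y & Hx & Hy & Hxy).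
    apply (id_or_const_on_min_max U c a b); [intros; lra | exact Hcab |].
    apply (id_or_const_on_sub U c (fun z => (a < z < b) \/ z = U x y)).
    + intros z [Haz Hzb]. destruct Hzb as [Hzb | ->]; [left; lra | right; congruence].
    + apply (id_or_const_on_product U e); [exact HU | apply Hc | exact Hgap01 | exact Hx | exact Hy | exact Hgap_ioc].
Qed.
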